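(* Let $K$ be a number field and $G\subseteq K^*$ a subgroup. Then there exists a unique subring $S\subseteq K$, minimal with respect to inclusion, such that for every finite non-empty subset $Y\subseteq G$ the $S$-submodule $SY$ of $K$ generated by $Y$ is an invertible ideal of $S$ within $K$. Moreover, this $S$ is an order.
   Context: For a subring $S$ of a field $K$, an invertible ideal of $S$ within $K$ is an $S$-submodule $I\subseteq K$ for which there exists an $S$-submodule $J\subseteq K$ with $IJ=S$ ($IJ$ the set of finite sums of products). An order is a domain whose additive group is isomorphic to $\mathbb{Z}^n$ for some $n\ge0$. *)

(* A number field is a finite-dimensional field extension of Q:
   K : fieldExtType rat. Subsets of K are predicates. *)
From HB Require Import structures.
From mathcomp Require Import all_boot all_order all_algebra all_field.
Set Implicit Arguments. Unset Strict Implicit. Unset Printing Implicit Defensive.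
Import GRing.Theory Num.Theory.
Local Open Scope ring_scope.

Section Defs.
Variable K : fieldExtType rat.

Definition is_mult_subgroup (G : {pred K}) : Prop :=
  (forall x, x \in G -> x != 0) /\ 1 \in G /\
  (forall x y, x \in G -> y \in G -> x * y \in G) /\
  (forall x, x \in G -> x^-1 \in G).

Definition is_subring (S : {pred K}) : Prop := subring_closed S.

Definition is_submodule (S : {pred K}) (I : K -> Prop) : Prop :=
  I 0 /\ (forall x y, I x -> I y -> I (x + y)) /\
  (forall s x, s \in S -> I x -> I (s * x)).

Definition gen_submodule (S : {pred K}) (Y : seq K) : K -> Prop :=
  fun x => exists s : 'I_(size Y) -> K,
    (forall i, s i \in S) /\ x = \sum_(i < size Y) s i * Y`_i.

Definition prod_set (I J : K -> Prop) : K -> Prop :=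
  fun x => exists (n : nat) (a b : 'I_n -> K),
    (forall i, I (a i) /\ J (b i)) /\ x = \sum_(i < n) a i * b i.

Definition invertible_ideal (S : {pred K}) (I : K -> Prop) : Prop :=
  is_submodule S I /\
  exists J : K -> Prop, is_submodule S J /\
    forall x, prod_set I J x <-> x \in S.

Definition all_gen_invertible (G S : {pred K}) : Prop :=
  forall Y : seq K, Y != [::] -> all (mem G) Y ->
    invertible_ideal S (gen_submodule S Y).

(* S is an order: (a subring of K, hence a domain) whose additive group is
   isomorphic to Z^n, i.e. S has a Z-basis b_1..b_n *)
Definition is_order (S : {pred K}) : Prop :=
  exists (n : nat) (b : 'I_n -> K),
    (forall i, b i \in S) /\
    (forall c : 'I_n -> int, \sum_(i < n) b i *~ c i = 0 -> forall i, c i = 0) /\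
    (forall x, x \in S -> exists c : 'I_n -> int, x = \sum_(i < n) b i *~ c i).
End Defs.

From HB Require Import structures.
From mathcomp Require Import all_boot all_order all_algebra all_field.
From mathcomp Require Import boolp ring.
Set Implicit Arguments. Unset Strict Implicit. Unset Printing Implicit Defensive.
Import Order.TTheory GRing.Theory Num.Theory.
Local Open Scope ring_scope.

(* Say that [a] splits in a subring [T] when [1 = u + v] with [u, v, u a, v / a]
   in [T]. Then [T Y] is invertible for all finite [Y] in [G] iff every [a] in [G]
   splits in [T]: [Y = {1, a}] gives the splitting, and conversely the splittings
   of the ratios of elements of [Y] multiply out to a partition of unity
   [1 = \sum_i w_i] in [T] with [w_i Y <= T y_i], so that [\sum_i T w_i / y_i]
   is an inverse of [T Y].
   If [a] splits in [T] then [Z[a] /\ Z[1/a] <= T], as [u^N x] and [v^N x] lie in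
   [T] for [x] there and [N] large. Conversely [a] splits in [Z[a] /\ Z[1/a] /\ O_K]:
   for a primitive integer relation [q] of [a] with [\sum_m c_m q_m = 1], take
   [u = \sum_m c_m (q_m + q_(m+1) a + ...)]. Hence the intersection [S] of all
   subrings in which every [a] in [G] splits is the least subring with the
   property, and [S <= O_K]. The trace form puts [O_K] inside a lattice of full
   rank, and subgroups of lattices are lattices, so [S] is an order. *)

(** * Splitting elements *)

Definition splits (F : fieldType) (T : {pred F}) (a : F) := exists u v,
  [/\ u \in T, v \in T, u + v = 1, u * a \in T & v * a^-1 \in T].

Lemma splitsS (F : fieldType) (T T' : {pred F}) (a : F) :
  {subset T <= T'} -> splits T a -> splits T' a.
Proof. by move=> sTT' [u [v [? ? ? ? ?]]]; exists u, v; split; auto. Qed.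

Section IntAdjoin.
Variable R : comNzRingType.

Definition Zadj (a : R) : {pred R} :=
  fun x => `[< exists p : {poly int}, x = (map_poly intr p).[a] >].

Lemma Zadj_subring a : subring_closed (Zadj a).
Proof.
split; first by apply/asboolP; exists 1; rewrite rmorph1 hornerC.
  move=> _ _ /asboolP[p ->] /asboolP[q ->]; apply/asboolP.
  by exists (p - q); rewrite rmorphB hornerD hornerN.
move=> _ _ /asboolP[p ->] /asboolP[q ->]; apply/asboolP.
by exists (p * q); rewrite rmorphM hornerM.
Qed.

HB.instance Definition _ a := GRing.isSubringClosed.Build R (Zadj a) (Zadj_subring a).

Lemma Zadj_gen a : a \in Zadj a.
Proof. by apply/asboolP; exists 'X; rewrite map_polyX hornerX. Qed.

Lemma Zadj_monomial a (z : int) k : z%:~R * a ^+ k \in Zadj a.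
Proof. by rewrite rpredM ?rpred_int ?rpredX ?Zadj_gen. Qed.

Lemma expr_mul_horner_mem (S : subringClosed R) (c b : R) (p : {poly int}) N :
  c \in S -> c * b \in S -> (size p <= N)%N -> c ^+ N * (map_poly intr p).[b] \in S.
Proof.
move=> cS cbS pN; rewrite horner_coef mulr_sumr rpred_sum // => i _.
have iN : (i <= N)%N := ltnW (leq_trans (ltn_ord i) (leq_trans (size_poly _ _) pN)).
rewrite coef_map /= -(subnK iN) exprD mulrCA -mulrA -exprMn.
by rewrite rpredM ?rpred_int // rpredM ?rpredX.
Qed.

End IntAdjoin.

Lemma splits_Zadj_mem (F : fieldType) (S : subringClosed F) (a x : F) :
  splits S a -> x \in Zadj a -> x \in Zadj a^-1 -> x \in S.
Proof.
move=> [u [v [uS vS uv1 uaS vaS]]] /asboolP[p xp] /asboolP[q xq].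
pose N := (size p + size q)%N.
have uNx : u ^+ N * x \in S by rewrite xp expr_mul_horner_mem ?leq_addr.
have vNx : v ^+ N * x \in S by rewrite xq expr_mul_horner_mem ?leq_addl.
rewrite -[x]mul1r -(expr1n F (N + N)) -uv1 exprDn mulr_suml rpred_sum // => i _.
rewrite mulrnAl rpredMn //; have [iN | Ni] := leqP i N.
  have -> : u ^+ (N + N - i) * v ^+ i * x = u ^+ N * x * (u ^+ (N - i) * v ^+ i).
    by rewrite -addnBA // exprD; ring.
  by rewrite rpredM // rpredM ?rpredX.
have -> : u ^+ (N + N - i) * v ^+ i * x = v ^+ N * x * (u ^+ (N + N - i) * v ^+ (i - N)).
  by rewrite -[in v ^+ i](subnK (ltnW Ni)) exprD; ring.
by rewrite rpredM // rpredM ?rpredX.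
Qed.

Section AlgebraicIntegers.
Variable R : comNzRingType.

Definition algint : {pred R} := fun x => `[< integralOver (intr : int -> R) x >].

Lemma algint_subring : subring_closed algint.
Proof.
split; first by apply/asboolP; apply: integral1.
  by move=> x y /asboolP ? /asboolP ?; apply/asboolP; apply: integral_sub.
by move=> x y /asboolP ? /asboolP ?; apply/asboolP; apply: integral_mul.
Qed.

HB.instance Definition _ := GRing.isSubringClosed.Build R algint algint_subring.

(* [c * b] is a root of the monic [X^k + \sum_i d_i c^(k-1-i) X^i]. *)
Lemma algint_lead_mul (c b : R) (d : nat -> int) k :
  c \in algint -> c * b ^+ k + \sum_(i < k) (d i)%:~R * b ^+ i = 0 ->
  c * b \in algint.
Proof.
case: k => [|k] cZ; first by rewrite big_ord0 addr0 mulr1 => ->; rewrite mul0r rpred0.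
move=> root_b; pose q := \poly_(i < k.+1) ((d i)%:~R * c ^+ (k - i)) : {poly R}.
have q_lt : (size q < size ('X^(k.+1) : {poly R}))%N by rewrite size_polyXn ltnS size_poly.
apply/asboolP/(@integral_root_monic _ _ _ _ ('X^(k.+1) + q)).
- by rewrite monicE lead_coefDl ?lead_coefXn.
- rewrite /root hornerD hornerXn (@horner_coef_wide _ k.+1) ?size_poly //.
  have -> : (c * b) ^+ k.+1 + \sum_(i < k.+1) q`_i * (c * b) ^+ i
      = c ^+ k * (c * b ^+ k.+1 + \sum_(i < k.+1) (d i)%:~R * b ^+ i).
    rewrite mulrDr mulr_sumr; congr (_ + _); first by rewrite exprMn exprS; ring.
    apply: eq_bigr => i _; rewrite coef_poly ltn_ord exprMn.
    have ik : (i <= k)%N by rewrite -ltnS.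
    by rewrite -[in c ^+ k](subnK ik) exprD; ring.
  by rewrite root_b mulr0.
apply/integral_poly => i; rewrite coefD coefXn coef_poly.
case: ltnP => [ik|_]; last by rewrite addr0; apply: integral_nat.
rewrite ltn_eqF // add0r.
by apply: integral_mul; [apply: integral_id | have /asboolP := rpredX (k - i) cZ].
Qed.

End AlgebraicIntegers.
Arguments algint {R}.

Section HornerTail.
Variables (F : fieldType) (q : {poly int}) (a : F).

Definition horner_tail m := \sum_(m <= i < size q) (q`_i)%:~R * a ^+ (i - m).

Lemma horner_tailS m : horner_tail m = (q`_m)%:~R + a * horner_tail m.+1.
Proof.
rewrite /horner_tail; have [mq | qm] := ltnP m (size q); last first.
  by rewrite !big_geq ?(leq_trans qm) // nth_default // mulr0 addr0.
rewrite big_ltn // subnn mulr1 mulr_sumr; congr (_ + _).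
apply: eq_big_nat => i /andP[mi _].
by rewrite mulrCA -exprS subnSK.
Qed.

Lemma horner_tail0 : horner_tail 0 = (map_poly intr q).[a].
Proof.
rewrite /horner_tail (@horner_coef_wide _ (size q)) ?size_poly // big_mkord.
by apply: eq_bigr => i _; rewrite coef_map subn0.
Qed.

Lemma horner_tail_expr m :
  a ^+ m * horner_tail m + \sum_(i < m) (q`_i)%:~R * a ^+ i = (map_poly intr q).[a].
Proof.
elim: m => [|m IH]; first by rewrite mul1r big_ord0 addr0 horner_tail0.
by rewrite -IH big_ord_recr /= (horner_tailS m) mulrDr exprSr; ring.
Qed.

Lemma horner_tail_Zadj m : horner_tail m \in Zadj a.
Proof. by apply: rpred_sum => i _; apply: Zadj_monomial. Qed.

Hypothesis q_root : (map_poly intr q).[a] = 0.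

Lemma horner_tail_Zadj_inv m : a != 0 -> horner_tail m \in Zadj a^-1.
Proof.
move=> a0; have am0 : a ^+ m != 0 by rewrite expf_neq0.
suff -> : horner_tail m = \sum_(i < m) (- q`_i)%:~R * a^-1 ^+ (m - i).
  by apply: rpred_sum => i _; apply: Zadj_monomial.
apply: (mulfI am0); have /eqP := horner_tail_expr m; rewrite q_root addr_eq0 => /eqP->.
rewrite mulr_sumr -sumrN; apply: eq_bigr => i _; rewrite intrN mulNr mulrN; congr (- _).
by rewrite exprVn exprB ?unitfE ?(ltnW (ltn_ord i)) // invf_div mulrCA [a ^+ m * _]mulrC mulfVK.
Qed.

Lemma horner_tail_algint m : horner_tail m \in algint.
Proof.
have [k] := ubnP (size q - m); elim: k m => // k IH m qmk.
have [mq | qm] := ltnP m (size q); last by rewrite /horner_tail big_geq ?rpred0.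
have tailS_int : horner_tail m.+1 \in algint by apply: IH; rewrite subnS prednK ?subn_gt0.
rewrite horner_tailS rpredD ?rpred_int // mulrC.
apply: (algint_lead_mul (d := fun i => q`_i) (k := m.+1) tailS_int).
by rewrite [horner_tail _ * _]mulrC horner_tail_expr q_root.
Qed.

End HornerTail.

Section IntegralCore.
Variable F : fieldType.

Definition Zcore (a : F) : {pred F} :=
  fun x => [&& x \in Zadj a, x \in Zadj a^-1 & x \in algint].

Lemma Zcore_subring a : subring_closed (Zcore a).
Proof.
split; first by apply/and3P; rewrite !rpred1.
  by move=> x y /and3P[? ? ?] /and3P[? ? ?]; apply/and3P; rewrite !rpredB.
by move=> x y /and3P[? ? ?] /and3P[? ? ?]; apply/and3P; rewrite !rpredM.
Qed.

HB.instance Definition _ a := GRing.isSubringClosed.Build F (Zcore a) (Zcore_subring a).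

Lemma Zcore_algint a : {subset Zcore a <= algint}.
Proof. by move=> x /and3P[]. Qed.

Lemma Zcore_sub (S : subringClosed F) a : splits S a -> {subset Zcore a <= S}.
Proof. by move=> Sa x /and3P[? ? _]; apply: splits_Zadj_mem Sa _ _. Qed.

Variables (q : {poly int}) (a : F).
Hypotheses (q_root : (map_poly intr q).[a] = 0) (a0 : a != 0).

Lemma horner_tail_Zcore m : horner_tail q a m \in Zcore a.
Proof.
by apply/and3P; rewrite horner_tail_Zadj horner_tail_Zadj_inv ?horner_tail_algint.
Qed.

Lemma mul_horner_tail_Zcore m : a * horner_tail q a m \in Zcore a.
Proof.
case: m => [|m]; first by rewrite horner_tail0 q_root mulr0 rpred0.
rewrite -[X in X \in _](addKr (q`_m)%:~R) -horner_tailS.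
by rewrite rpredD ?rpredN ?rpred_int ?horner_tail_Zcore.
Qed.

Lemma splits_Zcore_of_bezout (c : nat -> int) :
  \sum_(i < size q) c i * q`_i = 1 -> splits (Zcore a) a.
Proof.
move=> cq1; pose u := \sum_(m < size q) (c m)%:~R * horner_tail q a m.
have uZ : u \in Zcore a.
  by apply: rpred_sum => m _; rewrite rpredM ?rpred_int ?horner_tail_Zcore.
have cqF : \sum_(m < size q) (c m)%:~R * (q`_m)%:~R = 1 :> F.
  transitivity ((\sum_(i < size q) c i * q`_i)%:~R : F); last by rewrite cq1.
  by rewrite rmorph_sum; apply: eq_bigr => m _; rewrite rmorphM.
have uv : 1 - u = - (\sum_(m < size q) (c m)%:~R * (a * horner_tail q a m.+1)).
  rewrite -{1}cqF -sumrB -sumrN; apply: eq_bigr => m _.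
  by rewrite (horner_tailS q a m); ring.
exists u, (1 - u); split; rewrite ?subrKC ?rpredB ?rpred1 //.
- rewrite mulr_suml; apply: rpred_sum => m _.
  by rewrite -mulrA [_ * a]mulrC rpredM ?rpred_int ?mul_horner_tail_Zcore.
- rewrite uv mulNr mulr_suml rpredN; apply: rpred_sum => m _.
  by rewrite mulrAC -mulrA mulKf // rpredM ?rpred_int ?horner_tail_Zcore.
Qed.

End IntegralCore.


(** * Lattices *)

Definition ord_cons (X : Type) n (x : X) (f : 'I_n -> X) : 'I_n.+1 -> X :=
  fun i => if unlift ord0 i is Some j then f j else x.

Lemma ord_cons0 (X : Type) n (x : X) (f : 'I_n -> X) : ord_cons x f ord0 = x.
Proof. by rewrite /ord_cons unlift_none. Qed.

Lemma ord_cons_lift (X : Type) n (x : X) (f : 'I_n -> X) j :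
  ord_cons x f (lift ord0 j) = f j.
Proof. by rewrite /ord_cons liftK. Qed.

Section IntLattice.
Variable V : zmodType.

Definition zcomb n (b : 'I_n -> V) (c : 'I_n -> int) := \sum_(i < n) b i *~ c i.
Definition zfree n (b : 'I_n -> V) := forall c, zcomb b c = 0 -> forall i, c i = 0.
Definition zspan n (b : 'I_n -> V) : {pred V} := fun x => `[< exists c, x = zcomb b c >].
Definition zbasis (H : {pred V}) n (b : 'I_n -> V) :=
  [/\ forall i, b i \in H, zfree b & {subset H <= zspan b}].

Lemma zcombB n (b : 'I_n -> V) c1 c2 :
  zcomb b c1 - zcomb b c2 = zcomb b (fun i => c1 i - c2 i).
Proof. by rewrite -sumrB; apply: eq_bigr => i _; rewrite mulrzBr. Qed.

Lemma zcomb_recl n (b : 'I_n.+1 -> V) c :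
  zcomb b c = b ord0 *~ c ord0 + zcomb (b \o lift ord0) (c \o lift ord0).
Proof. exact: big_ord_recl. Qed.

Lemma zcomb_cons_coef n (b : 'I_n.+1 -> V) k c :
  zcomb b (ord_cons k c) = b ord0 *~ k + zcomb (b \o lift ord0) c.
Proof.
rewrite zcomb_recl ord_cons0; congr (_ + _).
by apply: eq_bigr => i _; rewrite /= ord_cons_lift.
Qed.

Lemma zcomb_cons_vec n (b : 'I_n -> V) x c :
  zcomb (ord_cons x b) c = x *~ c ord0 + zcomb b (c \o lift ord0).
Proof.
rewrite zcomb_recl ord_cons0; congr (_ + _).
by apply: eq_bigr => i _; rewrite /= ord_cons_lift.
Qed.

Lemma zcomb_cons n (b : 'I_n -> V) x c k :
  zcomb (ord_cons x b) (ord_cons k c) = x *~ k + zcomb b c.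
Proof.
rewrite zcomb_cons_vec ord_cons0; congr (_ + _).
by apply: eq_bigr => i _; rewrite /= ord_cons_lift.
Qed.

Lemma zspan_zmod n (b : 'I_n -> V) : zmod_closed (zspan b).
Proof.
split; first by apply/asboolP; exists (fun=> 0); rewrite /zcomb big1 // => i _; rewrite mulr0z.
move=> _ _ /asboolP[c1 ->] /asboolP[c2 ->]; apply/asboolP.
by exists (fun i => c1 i - c2 i); rewrite zcombB.
Qed.

HB.instance Definition _ n (b : 'I_n -> V) := GRing.isZmodClosed.Build V (zspan b) (zspan_zmod b).

(* Hermite: the first coordinates of the elements of [H] form a subgroup [d Z]
   of [Z], and an [h0] in [H] with first coordinate [d] together with a basis
   of [H /\ zspan b'] is a basis of [H]. *)
Section ZbasisStep.
Variables (n : nat) (H : {pred V}) (b : 'I_n.+1 -> V).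
Hypotheses (H_zmod : zmod_closed H) (b_free : zfree b) (H_b : {subset H <= zspan b}).
#[local] HB.instance Definition _ := GRing.isZmodClosed.Build V H H_zmod.
Local Notation b' := (b \o lift ord0).

Lemma zspan_lead_eq0 k : b ord0 *~ k \in zspan b' -> k = 0.
Proof.
move=> /asboolP[c bkc]; apply/eqP; rewrite -oppr_eq0; apply/eqP.
have := b_free (c := ord_cons (- k) c) _ ord0; rewrite ord_cons0; apply.
by rewrite zcomb_cons_coef -bkc mulrNz addNr.
Qed.

Definition lead_coord (k : int) := exists2 x, x \in H & x - b ord0 *~ k \in zspan b'.

Lemma lead_coord_exists x : x \in H -> exists k, x - b ord0 *~ k \in zspan b'.
Proof.
move=> /H_b /asboolP[c ->]; exists (c ord0); rewrite zcomb_recl addrC addKr.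
by apply/asboolP; exists (c \o lift ord0).
Qed.

Lemma zspan_tail_of_lead0 : (forall k, lead_coord k -> k = 0) -> {subset H <= zspan b'}.
Proof.
move=> lead0 x xH; have [k xk] := lead_coord_exists xH.
have k0 : k = 0 by apply: lead0; exists x.
by rewrite k0 mulr0z subr0 in xk.
Qed.

Lemma lead_coord_abs k : lead_coord k -> lead_coord `|k|%N.
Proof.
case: k => // k [x xH xk]; exists (- x); first by rewrite rpredN.
by rewrite -opprD rpredN; move: xk; rewrite NegzE mulrNz opprK.
Qed.

Lemma zfree_tail : zfree b'.
Proof.
move=> c bc0 i; have := b_free (c := ord_cons 0 c) _ (lift ord0 i).
by rewrite ord_cons_lift; apply; rewrite zcomb_cons_coef bc0 mulr0z addr0.
Qed.

Variables (d : nat) (h0 : V) (m : nat) (e : 'I_m -> V).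
Hypotheses (d_gt0 : (0 < d)%N) (h0H : h0 \in H) (h0d : h0 - b ord0 *~ d \in zspan b').
Hypothesis d_min : forall r : nat, (0 < r)%N -> lead_coord r -> (d <= r)%N.
Hypothesis e_basis : zbasis [predI H & zspan b'] e.

Lemma zfree_cons : zfree (ord_cons h0 e).
Proof.
have [eH e_free _] := e_basis.
move=> c; rewrite zcomb_cons_vec => /eqP; rewrite addr_eq0 => /eqP h0c.
have c0 : c ord0 = 0.
  suff /zspan_lead_eq0/eqP : b ord0 *~ (d%:Z * c ord0) \in zspan b'.
    by rewrite mulf_eq0 eqz_nat gtn_eqF //= => /eqP.
  rewrite mulrzA -[b ord0 *~ d](subKr h0) mulrzBl h0c rpredB ?rpredN ?rpredMz //.
  by rewrite rpred_sum // => i _; rewrite rpredMz //; case/andP: (eH i).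
move=> i; case: (unliftP ord0 i) => [j|] -> //.
by apply: (e_free (c \o lift ord0)); apply/eqP; rewrite -oppr_eq0 -h0c c0 mulr0z.
Qed.

Lemma zspan_cons : {subset H <= zspan (ord_cons h0 e)}.
Proof.
move=> x xH; have [k xk] := lead_coord_exists xH.
have [q [r [kqr r_ge0 r_lt]]] : exists q r, [/\ k = d%:Z * q + r, 0 <= r & r < d%:Z].
  have d0 : d%:Z != 0 by rewrite eqz_nat gtn_eqF.
  exists (k %/ d)%Z, (k %% d)%Z; split; [by rewrite mulrC -divz_eq | exact: modz_ge0 |].
  by have := ltz_mod k d0; rewrite ger0_norm.
have yH : x - h0 *~ q \in H by rewrite rpredB ?rpredMz.
have yr : x - h0 *~ q - b ord0 *~ r \in zspan b'.
  have -> : x - h0 *~ q - b ord0 *~ r = x - b ord0 *~ k - (h0 - b ord0 *~ d) *~ q.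
    rewrite kqr mulrzDr mulrzA mulrzBl.
    set A := h0 *~ q; set B := b ord0 *~ r; set C := b ord0 *~ d *~ q.
    by rewrite opprD opprB [RHS]addrC [RHS]addrCA addrACA subrr add0r addrA.
  by rewrite rpredB ?rpredMz.
have r0 : r = 0.
  apply/eqP/negPn/negP => r_neq0.
  have := d_min (r := `|r|%N); rewrite absz_gt0 r_neq0 gez0_abs // => /(_ isT).
  case/(_ _)/Wrap; first by exists (x - h0 *~ q).
  by rewrite -lez_nat gez0_abs // leNgt r_lt.
have y_b' : x - h0 *~ q \in zspan b' by move: yr; rewrite r0 mulr0z subr0.
have [_ _ /(_ (x - h0 *~ q))] := e_basis; rewrite inE yH y_b' => /(_ isT) /asboolP[c yc].
by apply/asboolP; exists (ord_cons q c); rewrite zcomb_cons -yc addrC subrK.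
Qed.
End ZbasisStep.

Lemma zbasis_exists n (H : {pred V}) (b : 'I_n -> V) :
  zmod_closed H -> zfree b -> {subset H <= zspan b} -> exists m (e : 'I_m -> V), zbasis H e.
Proof.
elim: n H b => [|n IH] H b H_zmod b_free H_b; first by exists 0%N, b; split=> // [[]].
pose b' := b \o lift ord0; pose H' := [predI H & zspan b'].
have H'_zmod : zmod_closed H'.
  have [H0 HB] := H_zmod.
  by split=> [|x y /andP[? ?] /andP[? ?]]; apply/andP; rewrite ?rpred0 ?rpredB ?HB.
have [m [e e_basis]] : exists m (e : 'I_m -> V), zbasis H' e.
  by apply: IH (zfree_tail b_free) _ => // x /andP[].
have [eH' e_free e_span] := e_basis.
have [[k [lead_k k0]] | no_lead] := pselect (exists k, lead_coord H b k /\ k != 0).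
  have lead_pos : exists r : nat, (0 < r)%N && `[< lead_coord H b r >].
    by exists `|k|%N; rewrite absz_gt0 k0; apply/asboolP/(lead_coord_abs H_zmod).
  case: (ex_minnP lead_pos) => d /andP[d_gt0 /asboolP[h0 h0H h0d]] d_min.
  exists m.+1, (ord_cons h0 e); split.
  - move=> i; case: (unliftP ord0 i) => [j|] ->; rewrite ?ord_cons_lift ?ord_cons0 //.
    by case/andP: (eH' j).
  - exact: (zfree_cons b_free d_gt0 h0d e_basis).
  apply: (zspan_cons H_zmod H_b d_gt0 h0H h0d _ e_basis) => r r_gt0 lead_r.
  by apply: d_min; rewrite r_gt0; apply/asboolP.
exists m, e; split=> // [i | x xH]; first by case/andP: (eH' i).
apply: e_span; rewrite inE xH; apply: (zspan_tail_of_lead0 H_b) => // j lead_j.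
by apply/eqP/negPn/negP => j0; apply: no_lead; exists j.
Qed.
End IntLattice.

(** * Invertibility of [T Y] *)

Section Invertibility.
Variables (K : fieldExtType rat) (T : {pred K}).
Hypothesis subringT : is_subring T.
#[local] HB.instance Definition _ := GRing.isSubringClosed.Build K T subringT.

Definition lin_span k (f : 'I_k -> K) : K -> Prop :=
  fun x => exists t : 'I_k -> K, (forall i, t i \in T) /\ x = \sum_(i < k) t i * f i.

Lemma lin_span_submodule k (f : 'I_k -> K) : is_submodule T (lin_span f).
Proof.
split; [|split].
- by exists (fun=> 0); split=> [i|]; rewrite ?rpred0 ?big1 // => i _; rewrite mul0r.
- move=> _ _ [s [sT ->]] [t [tT ->]]; exists (fun i => s i + t i).
  by split=> [i|]; rewrite ?rpredD // -big_split; apply: eq_bigr => i _; rewrite mulrDl.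
- move=> c _ cT [s [sT ->]]; exists (fun i => c * s i).
  by split=> [i|]; rewrite ?rpredM // mulr_sumr; apply: eq_bigr => i _; rewrite mulrA.
Qed.

Lemma lin_span_scaled k (f : 'I_k -> K) i c : c \in T -> lin_span f (c * f i).
Proof.
move=> cT; exists (fun j => if j == i then c else 0); split=> [j|].
  by case: eqP; rewrite ?rpred0.
rewrite (bigD1 i) //= eqxx big1 ?addr0 // => j /negbTE->; exact: mul0r.
Qed.

Lemma lin_span_gen k (f : 'I_k -> K) i : lin_span f (f i).
Proof. by rewrite -[f i]mul1r; apply: lin_span_scaled; rewrite rpred1. Qed.

Lemma prod_set_mul (I J : K -> Prop) x y : I x -> J y -> prod_set I J (x * y).
Proof. by move=> Ix Jy; exists 1%N, (fun=> x), (fun=> y); rewrite big_ord1. Qed.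

Lemma splits_of_invertible_pair a : a != 0 ->
  invertible_ideal T (gen_submodule T [:: 1; a]) -> splits T a.
Proof.
move=> a0 [_ [J [_ prodJ]]]; pose f i := [:: 1; a]`_i.
have J_T y : J y -> y \in T.
  by move=> Jy; apply/prodJ; rewrite -[y]mul1r; apply: prod_set_mul (@lin_span_gen 2 f ord0) Jy.
have J_aT y : J y -> a * y \in T.
  by move=> Jy; apply/prodJ; apply: prod_set_mul (@lin_span_gen 2 f (lift ord0 ord0)) Jy.
pose Q z := exists u v, [/\ u \in T, v \in T, u * a \in T, v * a^-1 \in T & z = u + v].
suff [u [v [uT vT uaT vaT uv1]]] : Q 1 by exists u, v.
have [n [A [B [AB_IJ ->]]]] : prod_set (gen_submodule T [:: 1; a]) J 1.
  by apply/prodJ; rewrite rpred1.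
(* each term [(s + t a) B] of [1] splits as [s B + t a B], as [B] and [a B] are in [T] *)
apply: (big_ind Q).
- by exists 0, 0; rewrite !mul0r addr0 rpred0.
- move=> _ _ [u1 [v1 [? ? ? ? ->]]] [u2 [v2 [? ? ? ? ->]]].
  by exists (u1 + u2), (v1 + v2); rewrite !mulrDl addrACA !rpredD.
move=> i _; have [[s [sT ->]] /[dup] /J_T BT /J_aT aBT] := AB_IJ i.
rewrite big_ord_recl big_ord1 /= mulr1 mulrDl.
exists (s ord0 * B i), (s (lift ord0 ord0) * a * B i); split.
- by rewrite rpredM ?sT.
- by rewrite -mulrA rpredM ?sT.
- by rewrite mulrAC -mulrA rpredM ?sT.
- by rewrite mulrAC mulfK // rpredM ?sT.
- by congr (_ + _); rewrite mulrAC.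
Qed.

(* On the piece [w i] of the partition, [T Y] is generated by [Y`_i]. *)
Definition partition_for (Y : seq K) (w : 'I_(size Y) -> K) :=
  [/\ forall i, w i \in T, \sum_i w i = 1 &
      forall i j : 'I_(size Y), w i * Y`_j / Y`_i \in T].
Arguments partition_for : clear implicits.

Lemma invertible_of_partition (Y : seq K) (w : 'I_(size Y) -> K) :
  (forall i : 'I_(size Y), Y`_i != 0) -> partition_for Y w ->
  invertible_ideal T (gen_submodule T Y).
Proof.
move=> Y0 [wT w1 wY]; split; first exact: (lin_span_submodule (fun i => Y`_i)).
exists (lin_span (fun i => w i / Y`_i)); split; first exact: lin_span_submodule.
move=> x; split.
- move=> [n [A [B [AB ->]]]]; apply: rpred_sum => i _.
  have [[s [sT ->]] [t [tT ->]]] := AB i.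
  rewrite mulr_suml; apply: rpred_sum => l _; rewrite mulr_sumr; apply: rpred_sum => j _.
  have -> : s l * Y`_l * (t j * (w j / Y`_j)) = s l * t j * (w j * Y`_l / Y`_j).
    by ring.
  by rewrite rpredM ?wY // rpredM ?sT ?tT.
- move=> xT; exists (size Y), (fun i => x * Y`_i), (fun i => w i / Y`_i).
  split=> [i|]; first by split; [apply: lin_span_scaled | apply: lin_span_gen].
  rewrite -[LHS]mulr1 -w1 mulr_sumr; apply: eq_bigr => i _.
  by rewrite mulrACA divff ?mulr1 ?Y0.
Qed.

Lemma partition_of_splits (Y : seq K) : Y != [::] -> {in Y, forall y, y != 0} ->
  {in Y &, forall y z, splits T (y / z)} -> exists w, partition_for Y w.
Proof.
elim: Y => [//|y Y IH] _ Y0 Ysplits; have y0 := Y0 y (mem_head y Y).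
have [->|Yn] := eqVneq Y [::].
  exists (fun=> 1); split=> [i||i j]; rewrite ?big_ord1 ?rpred1 //.
  by rewrite !ord1 /= mul1r divff ?rpred1.
have [w' [w'T w'1 w'Y]] : exists w, partition_for Y w.
  apply: IH => // [z zY | z t zY tY]; [apply: Y0 | apply: Ysplits];
    exact: mem_behead.
have /fin_all_exists [uv uvP] : forall j : 'I_(size Y), exists uv : K * K,
    [/\ uv.1 \in T, uv.2 \in T, uv.1 + uv.2 = 1,
        uv.1 * (y / Y`_j) \in T & uv.2 * (y / Y`_j)^-1 \in T].
  move=> j; have [|u [v [? ? ? ? ?]]] := Ysplits y Y`_j (mem_head y Y).
    by rewrite inE mem_nth ?orbT.
  by exists (u, v).
have Yj0 (j : 'I_(size Y)) : Y`_j != 0 by rewrite Y0 // inE mem_nth ?orbT.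
(* [w_0 := \sum_j w'_j v_j] and [w_(j+1) := w'_j u_j], where [u_j + v_j = 1] splits [y / Y_j] *)
exists (ord_cons (\sum_j w' j * (uv j).2) (fun i => w' i * (uv i).1)); split.
- move=> i; case: (unliftP ord0 i) => [j|] ->; rewrite ?ord_cons_lift ?ord_cons0.
    by case: (uvP j) => *; rewrite rpredM.
  by apply: rpred_sum => j _; case: (uvP j) => *; rewrite rpredM.
- rewrite big_ord_recl ord_cons0 -w'1 -big_split /=; apply: eq_bigr => j _.
  by rewrite ord_cons_lift -mulrDr addrC; case: (uvP j) => _ _ -> _ _; rewrite mulr1.
move=> i l; case: (unliftP ord0 i) => [i' ->|->]; case: (unliftP ord0 l) => [l' ->|->];
  rewrite ?ord_cons_lift ?ord_cons0 /= ?add0n.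
- have [u'T _ _ _ _] := uvP i'.
  by rewrite -mulrA mulrAC mulrA rpredM ?w'Y.
- by case: (uvP i') => _ _ _ uy _; rewrite -!mulrA rpredM ?w'T // mulrA.
- rewrite !mulr_suml; apply: rpred_sum => j _; case: (uvP j) => _ _ _ _ vy.
  have -> : w' j * (uv j).2 * Y`_l' / y
      = w' j * Y`_l' / Y`_j * ((uv j).2 * (y / Y`_j)^-1) by field; rewrite y0 Yj0.
  by rewrite rpredM ?w'Y.
- by rewrite mulfK // rpred_sum // => j _; case: (uvP j) => *; rewrite rpredM.
Qed.

Lemma gen_invertibleP (G : {pred K}) : is_mult_subgroup G ->
  all_gen_invertible G T <-> {in G, forall a, splits T a}.
Proof.
move=> [G0 [G1 [GM GV]]]; split=> [inv a aG | Gsplits Y Yn /allP YG].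
  by apply: splits_of_invertible_pair; [exact: G0 | apply: inv => //=; rewrite G1 aG].
have [w wP] : exists w, partition_for Y w.
  apply: partition_of_splits => // [y /YG /G0 // | y z yY zY].
  by apply/Gsplits/GM; [apply: YG | apply/GV/YG].
by apply: (invertible_of_partition _ wP) => i; apply/G0/YG/mem_nth.
Qed.
End Invertibility.

Lemma bezout_gcd (s : nat -> int) N : exists c : nat -> int,
  \sum_(i < N) c i * s i = (\big[gcdn/0%N]_(i < N) `|s i|%N)%:Z.
Proof.
elim: N => [|N [c IH]]; first by exists (fun=> 0); rewrite !big_ord0.
rewrite big_ord_recr /=; set g := \big[gcdn/0%N]_(i < N) _ in IH *.
have [u [v uv]] := Bezoutz g (s N).
exists (fun i => if (i < N)%N then u * c i else v).
rewrite -[(gcdn g _)%:Z]/(gcdz g (s N)) -uv -IH big_ord_recr /= ltnn mulr_sumr.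
by congr (_ + _); apply: eq_bigr => i _; rewrite ltn_ord mulrA.
Qed.

Section NumberField.
Variable K : fieldExtType rat.

Lemma primitive_int_relation (a : K) : exists q : {poly int},
  (map_poly intr q).[a] = 0 /\ exists c : nat -> int, \sum_(i < size q) c i * q`_i = 1.
Proof.
have /polyOver1P[q0 q0E] := minPolyOver 1%AS a.
have q0_root := root_minPoly 1%AS a; rewrite q0E in q0_root.
have q0n : q0 != 0.
  apply/eqP => q00; move: q0E; rewrite q00 map_poly0 => /eqP.
  by rewrite -size_poly_eq0 size_minPoly.
have [z [d d0 zE]] := rat_poly_scale q0.
have zn : z != 0 by apply: contraNneq q0n => z0; rewrite zE z0 map_poly0 scaler0.
have z_root : (map_poly intr z).[a] = 0.
  move: q0_root; rewrite zE map_polyZ /= -map_poly_comp /root hornerZ mulf_eq0.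
  rewrite scaler_eq0 oner_eq0 orbF invr_eq0 intr_eq0 (negbTE d0) /=.
  by rewrite (eq_map_poly (rmorph_int (in_alg K))) => /eqP.
exists (zprimitive z); split.
  move: z_root; rewrite {1}(zpolyEprim z) map_polyZ /= hornerZ => /eqP.
  rewrite mulf_eq0 => /orP[|/eqP //].
  by rewrite -(rmorph_int (in_alg K)) fmorph_eq0 intr_eq0 zcontents_eq0 (negbTE zn).
have [c cE] := bezout_gcd (fun i => (zprimitive z)`_i) (size (zprimitive z)).
exists c; rewrite cE.
have := zcontents_primitive z; rewrite zn /zcontents => /(congr1 absz).
by rewrite abszM absz_nat => /eqP; rewrite muln_eq1 => /andP[_ /eqP ->].
Qed.

Lemma splits_Zcore (a : K) : a != 0 -> splits (Zcore a) a.
Proof.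
move=> a0; have [q [q_root [c cq1]]] := primitive_int_relation a.
exact: splits_Zcore_of_bezout q_root a0 c cq1.
Qed.

Lemma algint_scale (b : K) : exists2 d : int, d != 0 & d%:~R * b \in algint.
Proof.
have [q [q_root [c cq1]]] := primitive_int_relation b.
have q0 : (0 < size q)%N.
  by rewrite lt0n; apply: contra_eq_neq cq1 => sq0; rewrite big1 // => -[i]; rewrite sq0.
exists (lead_coef q); first by rewrite lead_coef_eq0 -size_poly_gt0.
apply: (@algint_lead_mul _ _ _ (fun i => q`_i) (size q).-1); first exact: rpred_int.
move: q_root; rewrite (@horner_coef_wide _ (size q)) ?size_poly // -(prednK q0).
rewrite big_ord_recr /= addrC coef_map -lead_coefE => E; rewrite -[RHS]E.
by congr (_ + _); apply: eq_bigr => i _; rewrite coef_map.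
Qed.

End NumberField.

(** * The trace form and orders *)

Lemma mxtrace_eigenvalues (F : closedFieldType) n (A : 'M[F]_n) :
  exists2 rs : seq F, all (eigenvalue A) rs & \tr A = \sum_(z <- rs) z.
Proof.
have [rs charA] := closed_field_poly_normal (char_poly A).
rewrite (monicP (char_poly_monic A)) scale1r in charA.
exists rs; first by apply/allP => z zrs; rewrite eigenvalue_root_char charA root_prod_XsubC.
have size_rs : size rs = n.
  by have := size_char_poly A; rewrite charA size_prod_XsubC => -[].
case: (posnP n) => [n0 | n_gt0].
  rewrite /mxtrace big1 => [|[i i_lt]]; last by exfalso; rewrite n0 in i_lt.
  by move: size_rs; rewrite n0 => /size0nil ->; rewrite big_nil.
apply: oppr_inj; rewrite -char_poly_trace // charA -size_rs coefPn_prod_XsubC //.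
by rewrite size_rs -lt0n.
Qed.

Lemma det_int (R : archiNumDomainType) n (A : 'M[R]_n) :
  (forall i j, A i j \is a Num.int) -> \det A \is a Num.int.
Proof.
move=> A_int; apply: rpred_sum => s _; rewrite rpredMsign.
by apply: rpred_prod => i _; apply: A_int.
Qed.

Lemma adj_int (R : archiNumDomainType) n (A : 'M[R]_n) i j :
  (forall i j, A i j \is a Num.int) -> \adj A i j \is a Num.int.
Proof. by move=> A_int; rewrite mxE rpredMsign det_int // => k l; rewrite !mxE. Qed.

Section TraceForm.
Import passmx.
Variables (K : fieldExtType rat) (b : (\dim {:K}).-tuple K).
Hypothesis b_basis : basis_of fullv b.
Local Notation n := (\dim {:K}).
Local Notation ratC := (ratr : rat -> algC).

Definition regmx (x : K) : 'M[rat]_n := mxof b b (amulr x).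

Lemma regmxM x y : regmx (x * y) = regmx x *m regmx y.
Proof.
rewrite /regmx -mxof_comp //; congr (mxof _ _ _).
by apply/lfunP => v; rewrite comp_lfunE !lfunE /= mulrA.
Qed.

Lemma regmx1 : regmx 1 = 1%:M.
Proof.
rewrite /regmx -(mxof1 (basis_free b_basis)); congr (mxof _ _ _).
by apply/lfunP => v; rewrite !lfunE /= mulr1.
Qed.

Fact regmx_is_linear : linear regmx.
Proof. by move=> a x y; rewrite /regmx !linearP. Qed.

HB.instance Definition _ := GRing.isSemilinear.Build rat K 'M[rat]_n _ regmx
  (GRing.semilinear_linear regmx_is_linear).

Lemma regmx_eigenvalue_root x (p : {poly int}) z :
  root (map_poly intr p) x -> eigenvalue (map_mx ratC (regmx x)) z ->
  root (map_poly intr p) z.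
Proof.
move=> /rootP px0 /eigenvalueP[v vx v0].
have vX k : v *m map_mx ratC (regmx (x ^+ k)) = z ^+ k *: v.
  elim: k => [|k IH]; first by rewrite expr0 regmx1 map_scalar_mx rmorph1 mulmx1 scale1r.
  by rewrite exprSr regmxM map_mxM mulmxA IH -scalemxAl vx scalerA -exprSr.
have : v *m map_mx ratC (regmx (map_poly intr p).[x]) = (map_poly intr p).[z] *: v.
  rewrite !(@horner_coef_wide _ (size p)) ?size_poly // linear_sum.
  rewrite raddf_sum mulmx_sumr scaler_suml.
  apply: eq_bigr => i _; rewrite !coef_map /= mulrzl -scaler_int linearZ map_mxZ /=.
  by rewrite rmorph_int -scalemxAr vX scalerA mulrzl.
by rewrite px0 linear0 map_mx0 mulmx0 => /esym/eqP; rewrite scaler_eq0 (negPf v0) orbF.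
Qed.

Definition Tr x := \tr (regmx x).

(* The eigenvalues of [regmx x] are roots of a monic integer relation for [x],
   so their sum [Tr x] is a rational algebraic integer. *)
Lemma Tr_algint x : x \in algint -> Tr x \is a Num.int.
Proof.
move=> /asboolP[p p_monic px0].
have [rs rs_eig trA] := mxtrace_eigenvalues (map_mx ratC (regmx x)).
have trE : ratC (Tr x) = \tr (map_mx ratC (regmx x)).
  by rewrite /Tr /mxtrace rmorph_sum; apply: eq_bigr => i _; rewrite [RHS]mxE.
rewrite -Cint_rat trE Cint_rat_Aint //; first by rewrite -trE Crat_rat.
rewrite trA big_seq rpred_sum // => z zrs.
apply: (@root_monic_Aint (map_poly intr p)).
- exact: regmx_eigenvalue_root px0 (allP rs_eig z zrs).
- exact: monic_map.
- by apply/polyOverP => i; rewrite coef_map /=; apply: rpred_int.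
Qed.

Lemma TrZ a x : Tr (a *: x) = a * Tr x.
Proof. by rewrite /Tr linearZ mxtraceZ. Qed.

Lemma Tr_sum (I : Type) (r : seq I) (F : I -> K) :
  Tr (\sum_(i <- r) F i) = \sum_(i <- r) Tr (F i).
Proof. by rewrite /Tr linear_sum raddf_sum. Qed.

Lemma Tr1 : Tr 1 = n%:R.
Proof. by rewrite /Tr regmx1 mxtrace1. Qed.

Hypothesis b_int : forall i : 'I_n, b`_i \in algint.

Let D : 'M[rat]_n := \matrix_(i, j) Tr (b`_i * b`_j).

Lemma Tr_comb (c : 'rV_n) (j : 'I_n) : Tr ((\sum_i c 0 i *: b`_i) * b`_j) = (c *m D) 0 j.
Proof.
rewrite mulr_suml Tr_sum !mxE; apply: eq_bigr => i _.
by rewrite -scalerAl TrZ mxE.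
Qed.

Lemma trace_form_det_neq0 : \det D != 0.
Proof.
(* A nonzero [y] orthogonal to all of [K] would give [n = Tr (y / y) = 0]. *)
apply/negP => /det0P[w w0 wD]; pose y := \sum_i w 0 i *: b`_i.
have Tr_y z : Tr (y * z) = 0.
  rewrite (coord_basis b_basis (memvf z)) mulr_sumr Tr_sum big1 // => j _.
  by rewrite -scalerAr TrZ Tr_comb wD mxE mulr0.
have y0 : y != 0.
  apply: contraNneq w0 => y0; apply/eqP/rowP => i; rewrite mxE.
  exact: (freeP (basis_free b_basis)) y0 i.
have := Tr_y y^-1; rewrite divff // Tr1 => /eqP; rewrite pnatr_eq0 dimv_eq0 => /eqP K0.
by have := memvf (1 : K); rewrite K0 memv0 oner_eq0.
Qed.

Lemma algint_det_coord_int x i : x \in algint -> \det D * coord b i x \is a Num.int.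
Proof.
move=> x_int; pose c := \row_i coord b i x.
have cD_int j : (c *m D) 0 j \is a Num.int.
  rewrite -Tr_comb; apply: Tr_algint; rewrite rpredM //.
  rewrite [X in X \in _](_ : _ = x) // [RHS](coord_basis b_basis (memvf x)).
  by apply: eq_bigr => k _; rewrite mxE.
(* Cramer's rule, with [(c *m D) 0 j = Tr (x * b`_j)] *)
have -> : \det D * coord b i x = (c *m D *m \adj D) 0 i.
  by rewrite -mulmxA mul_mx_adj mul_mx_scalar !mxE.
rewrite mxE rpred_sum // => j _; rewrite rpredM ?cD_int ?adj_int // => k l.
by rewrite mxE Tr_algint ?rpredM.
Qed.

Definition trace_dual_lattice (i : 'I_n) : K := (\det D)^-1 *: b`_i.

Lemma trace_dual_lattice_zfree : zfree trace_dual_lattice.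
Proof.
move=> c c0 i; have D0 := trace_form_det_neq0.
have /(freeP (basis_free b_basis))/(_ i)/eqP : \sum_i ((c i)%:~R / \det D) *: b`_i = 0.
  by rewrite -[RHS]c0; apply: eq_bigr => k _; rewrite -scalerA scaler_int.
by rewrite mulf_eq0 invr_eq0 (negPf D0) orbF intr_eq0 => /eqP.
Qed.

Lemma algint_sub_trace_dual : {subset algint <= zspan trace_dual_lattice}.
Proof.
move=> x x_int; apply/asboolP.
have /fin_all_exists[k kE] : forall i, exists k : int, \det D * coord b i x = k%:~R.
  by move=> i; apply/intrP/algint_det_coord_int.
exists k; rewrite [LHS](coord_basis b_basis (memvf x)); apply: eq_bigr => i _.
by rewrite -scaler_int scalerA -kE mulrAC divff ?mul1r ?trace_form_det_neq0.
Qed.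

End TraceForm.

Lemma integral_basis_exists (K : fieldExtType rat) :
  exists2 b : (\dim {:K}).-tuple K,
    basis_of fullv b & forall i : 'I_(\dim {:K}), b`_i \in algint.
Proof.
pose e := vbasis {:K}; have e_free := basis_free (vbasisP {:K}).
have /fin_all_exists[d dP] : forall i : 'I_(\dim {:K}), exists d : int,
    d != 0 /\ d%:~R * e`_i \in algint.
  by move=> i; have [d ? ?] := algint_scale e`_i; exists d.
pose b := [tuple (d i)%:~R * e`_i | i < \dim {:K}].
have bE (i : 'I_(\dim {:K})) : b`_i = (d i)%:~R *: e`_i.
  by rewrite nth_mktuple scaler_int mulrzl.
exists b => [|i]; last by rewrite nth_mktuple; case: (dP i).
rewrite basisEfree size_tuple subvf leqnn !andbT.
apply/freeP => k k0 i.
have /(freeP e_free)/(_ i)/eqP : \sum_i (k i * (d i)%:~R) *: e`_i = 0.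
  by rewrite -[RHS]k0; apply: eq_bigr => j _; rewrite bE scalerA.
by rewrite mulf_eq0 intr_eq0; case: (dP i) => /negPf-> _; rewrite orbF => /eqP.
Qed.

Lemma is_order_of_algint (K : fieldExtType rat) (S : {pred K}) :
  zmod_closed S -> {subset S <= algint} -> is_order S.
Proof.
move=> S_zmod S_int; have [b b_basis b_int] := integral_basis_exists K.
have [m [e [eS e_free S_e]]] := zbasis_exists S_zmod (trace_dual_lattice_zfree b_basis)
  (fun x xS => algint_sub_trace_dual b_basis b_int (S_int x xS)).
by exists m, e; split=> //; split=> // x /S_e /asboolP.
Qed.

(** * The least subring in which [G] splits *)

Section SplitClosure.
Variables (K : fieldExtType rat) (G : {pred K}).

Definition split_closure : {pred K} := fun x =>
  `[< forall T : {pred K}, is_subring T -> {in G, forall a, splits T a} -> x \in T >].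

Lemma split_closure_subring : is_subring split_closure.
Proof.
split=> [|x y /asboolP xS /asboolP yS|x y /asboolP xS /asboolP yS];
  apply/asboolP => T /[dup] T_ring [T1 TB TM] T_split //.
  by apply: TB; [apply: xS | apply: yS].
by apply: TM; [apply: xS | apply: yS].
Qed.

Lemma split_closure_sub T : is_subring T -> {in G, forall a, splits T a} ->
  {subset split_closure <= T}.
Proof. by move=> T_ring T_split x /asboolP; apply. Qed.

Hypothesis G_group : is_mult_subgroup G.

Lemma split_closure_splits : {in G, forall a, splits split_closure a}.
Proof.
move=> a aG; have a0 := G_group.1 a aG.
apply: splitsS (splits_Zcore a0) => x xZ; apply/asboolP => T T_ring T_split.
pose TS : subringClosed K := HB.pack T (GRing.isSubringClosed.Build K T T_ring).
exact: (@Zcore_sub _ TS a (T_split a aG)).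
Qed.

Lemma split_closure_algint : {subset split_closure <= algint}.
Proof.
apply: split_closure_sub; first exact: algint_subring.
by move=> a aG; apply: splitsS (splits_Zcore (G_group.1 a aG)); apply: Zcore_algint.
Qed.

End SplitClosure.

Theorem theorem4p70 (K : fieldExtType rat) (G : {pred K}) :
  is_mult_subgroup G ->
  exists S : {pred K},
    [/\ is_subring S,
        all_gen_invertible G S,
        (* S is the least such subring *)
        (forall T : {pred K}, is_subring T -> all_gen_invertible G T ->
           {subset S <= T}),
        (* and the unique minimal one *)
        (forall T : {pred K}, is_subring T -> all_gen_invertible G T ->
           (forall T' : {pred K}, is_subring T' -> all_gen_invertible G T' ->
              {subset T' <= T} -> T' =i T) ->
           T =i S)
      & is_order S].
Proof.
move=> G_group; pose S := split_closure G.
have S_ring : is_subring S := split_closure_subring G.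
have S_inv : all_gen_invertible G S.
  exact/(gen_invertibleP S_ring G_group)/split_closure_splits.
have S_least T : is_subring T -> all_gen_invertible G T -> {subset S <= T}.
  by move=> T_ring /(gen_invertibleP T_ring G_group); apply: split_closure_sub.
exists S; split=> //.
  move=> T T_ring T_inv T_min x.
  by rewrite (T_min S S_ring S_inv (S_least T T_ring T_inv)).
exact: is_order_of_algint (GRing.subring_closedB S_ring) (split_closure_algint G_group).
Qed.
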